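(* Let $x_j=\ell_j/p_j$. Then $\sum_{n=1}^{2P}n\,\chi_{2P}^{(\ell_1,\ell_2,\ell_3)}(n)\ne0$ if and only if \[ 1<x_1+x_2+x_3<3,\quad -1<x_1+x_2-x_3<1,\quad -1<x_1-x_2+x_3<1,\quad -1<-x_1+x_2+x_3<1, \] and in that case $\sum_{n=1}^{2P}n\,\chi_{2P}^{(\ell_1,\ell_2,\ell_3)}(n)=4P$.
   Context: $p_1,p_2,p_3$ pairwise coprime positive integers, $P=p_1p_2p_3$, integers $1\le\ell_j\le p_j-1$. The odd function $\chi_{2P}^{(\ell_1,\ell_2,\ell_3)}:\mathbb Z\to\{0,\pm1\}$, periodic mod $2P$, is defined by: $\chi(n)=1$ if $n\equiv P(1+\sum_j\varepsilon_j\ell_j/p_j)\pmod{2P}$ for some signs $\varepsilon_j\in\{\pm1\}$ with $\varepsilon_1\varepsilon_2\varepsilon_3=-1$; $\chi(n)=-1$ if this holds with $\varepsilon_1\varepsilon_2\varepsilon_3=1$; $\chi(n)=0$ otherwise. *)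

From HB Require Import structures.
From mathcomp Require Import all_boot all_order all_algebra.
Set Implicit Arguments. Unset Strict Implicit. Unset Printing Implicit Defensive.
Import Order.TTheory GRing.Theory Num.Theory.
Local Open Scope ring_scope.

Definition sgb (b : bool) : int := if b then 1 else -1.

(* The residue P (1 + e1 l1/p1 + e2 l2/p2 + e3 l3/p3), an integer since p_j | P. *)
Definition chi_res (p1 p2 p3 l1 l2 l3 : nat) (e1 e2 e3 : bool) : int :=
  let P := (p1 * p2 * p3)%N in
  P%:Z + sgb e1 * (l1 * (P %/ p1))%N%:Z + sgb e2 * (l2 * (P %/ p2))%N%:Z
       + sgb e3 * (l3 * (P %/ p3))%N%:Z.

Definition chi (p1 p2 p3 l1 l2 l3 : nat) (n : int) : int :=
  let P := (p1 * p2 * p3)%N in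
  let hit (s : int) := [exists e1 : bool, exists e2 : bool, exists e3 : bool,
      (sgb e1 * sgb e2 * sgb e3 == s) &&
      (n == chi_res p1 p2 p3 l1 l2 l3 e1 e2 e3 %[mod (2 * P)%N%:Z])%Z] in
  if hit (-1) then 1 else if hit 1 then -1 else 0.

From HB Require Import structures.
From mathcomp Require Import all_boot all_order all_algebra.
From mathcomp Require Import zify ring.
Import Order.TTheory GRing.Theory Num.Theory.
Local Open Scope ring_scope.

(* The residues P (1 + e1 x1 + e2 x2 + e3 x3) are P + s_e with
   s_e = e1 a1 + e2 a2 + e3 a3 and a_j = l_j P / p_j.  Since p_j divides P and
   a_k (k <> j) but not a_j, no {-1,0,1}-combination of the a_j other than 0 is
   a multiple of P; so the eight residues are distinct modulo 2P and none of the
   s_e is congruent to P.  Hence the sum is - sum_e e1 e2 e3 (P + w(s_e)), where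
   w(s) in (-P, P] is the centred residue of s modulo 2P.  As s_(-e) = - s_e,
   pairing e with -e leaves -2 times the sum of w(s_e) over the four e with
   e1 e2 e3 = 1; those four s_e add up to 0, so only the wrap-arounds count:
   s_(+,+,+) may exceed P, at most one of the other three may fall below -P, and
   the result is 4P exactly when the first happens and the second does not. *)

Lemma dvdz_small (m x : int) : `|x| < m -> (m %| x)%Z -> x = 0.
Proof.
move=> lt_x_m /dvdzP[q def_x]; have m_gt0 : 0 < m by apply: le_lt_trans lt_x_m.
move: lt_x_m; rewrite {}def_x normrM (gtr0_norm m_gt0) -[X in _ < X]mul1r ltr_pM2r //.
by case: q => [[|]|] //; rewrite mul0r.
Qed.

Lemma eqz_mod_small (m x y : int) : `|x - y| < m -> (x == y %[mod m])%Z = (x == y).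
Proof.
move=> lt_xy_m; rewrite eqz_mod_dvd -subr_eq0.
by apply/idP/eqP => [/(dvdz_small _ _ lt_xy_m)|->] //; rewrite dvdz0.
Qed.

Lemma sum_mod_indicator (m : nat) (r r0 c : int) :
  1 <= r0 <= m%:Z -> (r0 = r %[mod m%:Z])%Z ->
  \sum_(1 <= n < m.+1) n%:Z * (if (n%:Z == r %[mod m%:Z])%Z then c else 0) = c * r0.
Proof.
case: r0 => [k|//] k_range /eqP; rewrite eq_sym => /eqP r_k.
rewrite (eq_big_nat _ _ (F2 := fun n => n%:Z * (if n == k then c else 0))) => [|n n_range].
  have k_in : k \in index_iota 1 m.+1 by rewrite mem_index_iota; lia.
  rewrite (bigD1_seq k) ?iota_uniq //= eqxx big1 => [|n /negbTE->].
    by rewrite addr0 mulrC.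
  by rewrite mulr0.
by rewrite r_k eqz_mod_small ?eqz_nat //; lia.
Qed.

(* For -3P < s < 3P, the representative of s modulo 2P in (-P, P]. *)
Definition wrap (P s : int) : int :=
  if s <= - P then s + 2 * P else if P < s then s - 2 * P else s.

Lemma wrap_mod P s : (wrap P s = s %[mod 2 * P])%Z.
Proof.
rewrite /wrap; case: ifP => _; [|case: ifP => _ //].
  exact: modzDr.
by apply/eqP; rewrite eqz_mod_dvd addrAC subrr sub0r rpredN dvdzz.
Qed.

Lemma wrap_range P s : - (3 * P) < s < 3 * P -> - P < wrap P s <= P.
Proof. by rewrite /wrap; do ?case: ifP => ?; lia. Qed.

Lemma wrapN P s : s != P -> s != - P -> - (3 * P) < s < 3 * P ->
  wrap P (- s) = - wrap P s.
Proof. by rewrite /wrap; do ?case: ifP => ?; lia. Qed.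

Lemma sum_bool3 (V : nmodType) (F : bool * bool * bool -> V) :
  \sum_e F e = F (true, true, true) + F (true, true, false) + F (true, false, true)
    + F (true, false, false) + F (false, true, true) + F (false, true, false)
    + F (false, false, true) + F (false, false, false).
Proof.
rewrite (eq_bigr (fun e => F (e.1, e.2))) => [|[]//].
rewrite -(pair_bigA _ (fun e12 e3 => F (e12, e3))).
rewrite (eq_bigr (fun e => \sum_e3 F (e.1, e.2, e3))) => [|[]//].
by rewrite -(pair_bigA _ (fun e1 e2 => \sum_e3 F (e1, e2, e3))) !big_bool /= !addrA.
Qed.

Lemma exists_bool3 (Q : bool -> bool -> bool -> bool) :
  [exists e1, exists e2, exists e3, Q e1 e2 e3] =
  [exists e : bool * bool * bool, Q e.1.1 e.1.2 e.2].
Proof.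
apply/existsP/existsP => [[e1 /existsP[e2 /existsP[e3 hQ]]]|[[[e1 e2] e3] hQ]].
  by exists (e1, e2, e3).
by exists e1; apply/existsP; exists e2; apply/existsP; exists e3.
Qed.

Lemma signed_indicatorE (T : finType) (m n : int) (res sg : T -> int) :
  (forall e f, (res e == res f %[mod m])%Z -> e = f) ->
  (forall e, (sg e == 1) || (sg e == -1)) ->
  (if [exists e, (sg e == -1) && (n == res e %[mod m])%Z] then 1
   else if [exists e, (sg e == 1) && (n == res e %[mod m])%Z] then -1 else 0)
  = \sum_e (if (n == res e %[mod m])%Z then - sg e else 0).
Proof.
move=> res_inj sg_sign.
have [e0 hit_e0|no_hit] := pickP (fun e => n == res e %[mod m])%Z; last first.
  rewrite big1 => [|e _]; last by rewrite no_hit.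
  by rewrite !(introF existsP) // => -[e /andP[_]]; rewrite no_hit.
have hitE e : (n == res e %[mod m])%Z = (e == e0).
  apply/idP/eqP => [hit_e|->//]; apply: res_inj.
  by rewrite -(eqP hit_e) (eqP hit_e0).
have exists_hitE s : [exists e, (sg e == s) && (n == res e %[mod m])%Z] = (sg e0 == s).
  apply/existsP/idP => [[e /andP[/eqP <-]]|sg_e0]; first by rewrite hitE => /eqP->.
  by exists e0; rewrite (eqP sg_e0) hitE !eqxx.
rewrite (bigD1 e0 isT) big1 => [|e /negbTE e_e0]; last by rewrite hitE e_e0.
by rewrite hit_e0 !exists_hitE /= addr0; case/orP: (sg_sign e0) => /eqP->.
Qed.

Lemma sgbE (b : bool) : sgb b = 2 * b%:Z - 1.
Proof. by case: b. Qed.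

Lemma sgbN (b : bool) : sgb (~~ b) = - sgb b.
Proof. by case: b. Qed.

Definition sgb3 (e : bool * bool * bool) : int := sgb e.1.1 * sgb e.1.2 * sgb e.2.

Definition balanced (P a1 a2 a3 : int) : bool :=
  [&& P < a1 + a2 + a3 < 3 * P, - P < a1 + a2 - a3 < P,
      - P < a1 - a2 + a3 < P & - P < - a1 + a2 + a3 < P].

Section SignedSums.

Variables P a1 a2 a3 : int.
Hypotheses (a1_range : 0 < a1 < P) (a2_range : 0 < a2 < P) (a3_range : 0 < a3 < P).
Hypothesis a_indep : forall s1 s2 s3 : int, `|s1| <= 1 -> `|s2| <= 1 -> `|s3| <= 1 ->
  (P %| s1 * a1 + s2 * a2 + s3 * a3)%Z -> [/\ s1 = 0, s2 = 0 & s3 = 0].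

Definition signed_sum (e : bool * bool * bool) : int :=
  sgb e.1.1 * a1 + sgb e.1.2 * a2 + sgb e.2 * a3.

Lemma signed_sum_range e : - (3 * P) < signed_sum e < 3 * P.
Proof. by case: e => -[[] []] []; rewrite /signed_sum /sgb /=; lia. Qed.

Lemma signed_sum_ndvd e : ~~ (P %| signed_sum e)%Z.
Proof.
have sgb_norm b : `|sgb b| <= 1 by case: b.
apply/negP => /(a_indep _ _ _ (sgb_norm _) (sgb_norm _) (sgb_norm _)) [].
by case: e.1.1.
Qed.

Lemma signed_sum_inj_mod e f :
  (P + signed_sum e == P + signed_sum f %[mod 2 * P])%Z -> e = f.
Proof.
case: e f => -[e1 e2] e3 [[f1 f2] f3].
have diff_norm (b c : bool) : `|b%:Z - c%:Z| <= 1 by case: b; case: c.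
have diff_eq0 (b c : bool) : b%:Z - c%:Z = 0 -> b = c by case: b; case: c.
rewrite eqz_mod_dvd.
rewrite (_ : _ - _ = 2 * ((e1%:Z - f1%:Z) * a1 + (e2%:Z - f2%:Z) * a2 + (e3%:Z - f3%:Z) * a3)).
  rewrite dvdz_mul2l // => /(a_indep _ _ _ (diff_norm _ _) (diff_norm _ _) (diff_norm _ _)).
  by case=> /diff_eq0-> /diff_eq0-> /diff_eq0->.
by rewrite /signed_sum !sgbE /=; ring.
Qed.

Lemma signed_sumN e : signed_sum (~~ e.1.1, ~~ e.1.2, ~~ e.2) = - signed_sum e.
Proof. by rewrite /signed_sum !sgbN /=; ring. Qed.

Lemma wrap_signed_sumN e :
  wrap P (signed_sum (~~ e.1.1, ~~ e.1.2, ~~ e.2)) = - wrap P (signed_sum e).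
Proof.
have ndvd := signed_sum_ndvd e.
rewrite signed_sumN wrapN ?signed_sum_range //.
  by apply: contraNneq ndvd => ->.
by apply: contraNneq ndvd => ->; rewrite rpredN.
Qed.

Lemma sum_sgb3_wrap :
  \sum_e sgb3 e * (P + wrap P (signed_sum e)) =
  2 * (wrap P (signed_sum (true, true, true)) + wrap P (signed_sum (true, false, false))
     + wrap P (signed_sum (false, true, false)) + wrap P (signed_sum (false, false, true))).
Proof.
rewrite sum_bool3 (wrap_signed_sumN (true, true, true)) (wrap_signed_sumN (true, false, false))
  (wrap_signed_sumN (false, true, false)) (wrap_signed_sumN (false, false, true)).
by rewrite /sgb3 /sgb /=; ring.
Qed.

Lemma wrap_sum_balanced :
  wrap P (signed_sum (true, true, true)) + wrap P (signed_sum (true, false, false))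
  + wrap P (signed_sum (false, true, false)) + wrap P (signed_sum (false, false, true))
  = if balanced P a1 a2 a3 then - (2 * P) else 0.
Proof.
have signed_sum_neqP e : (signed_sum e != P) && (signed_sum e != - P).
  have ndvd := signed_sum_ndvd e.
  by apply/andP; split; apply: contraNneq ndvd => ->; rewrite ?rpredN.
move: (signed_sum_neqP (true, true, true)) (signed_sum_neqP (true, false, false)).
move: (signed_sum_neqP (false, true, false)) (signed_sum_neqP (false, false, true)).
by rewrite /signed_sum /sgb /balanced /wrap /=; do ?case: ifP => ?; lia.
Qed.

Lemma sum_residue_indicators (N : nat) : N%:Z = 2 * P ->
  \sum_(1 <= n < N.+1) n%:Z *
     \sum_e (if (n%:Z == P + signed_sum e %[mod N%:Z])%Z then - sgb3 e else 0)
  = if balanced P a1 a2 a3 then 4 * P else 0.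
Proof.
move=> N_def; under eq_bigr do rewrite big_distrr /=.
rewrite exchange_big /= (eq_bigr (fun e => - (sgb3 e * (P + wrap P (signed_sum e))))).
  by rewrite sumrN sum_sgb3_wrap wrap_sum_balanced; case: ifP => _; lia.
move=> e _; rewrite (@sum_mod_indicator N _ (P + wrap P (signed_sum e))) ?mulNr //.
  by have := @wrap_range P _ (signed_sum_range e); lia.
by rewrite N_def -modzDmr wrap_mod modzDmr.
Qed.

End SignedSums.

Lemma mul_divn_range (l p N : nat) :
  (0 < l < p)%N -> (p %| N)%N -> (0 < N)%N -> (0 < l * (N %/ p) < N)%N.
Proof. by move=> l_range /divnK; set q := (N %/ p)%N => N_def N_gt0; nia. Qed.

Lemma sign_coef_eq0 (p l q : nat) (s y : int) : (0 < l < p)%N -> coprime p q ->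
  `|s| <= 1 -> (p%:Z %| s * (l * q)%N%:Z + p%:Z * y)%Z -> s = 0.
Proof.
move=> l_range co_pq s_le1.
rewrite rpredDr; last exact: dvdz_mulr _ (dvdzz _).
rewrite PoszM mulrA Gauss_dvdzl ?coprimezE //.
have lt_sl_p : `|s * l%:Z| < p%:Z by rewrite normrM; nia.
move=> /(dvdz_small _ _ lt_sl_p)/eqP; rewrite mulf_eq0 => /orP[/eqP//|].
by rewrite eqz_nat; lia.
Qed.

Lemma ratio_divn (R : numFieldType) (l p N : nat) : (0 < N)%N -> (p %| N)%N ->
  l%:R / p%:R = (l * (N %/ p))%N%:R / N%:R :> R.
Proof.
move=> N_gt0 /divnK N_def.
have q_neq0 : ((N %/ p)%N%:R : R) != 0 by rewrite pnatr_eq0; lia.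
have p_neq0 : (p%:R : R) != 0 by rewrite pnatr_eq0; lia.
set q := (N %/ p)%N in N_def q_neq0 *.
by rewrite -N_def !natrM invfM mulrA mulfK.
Qed.

Lemma balanced_ratioE (R : realFieldType) (P a1 a2 a3 : int) : 0 < P ->
  let x1 : R := a1%:~R / P%:~R in
  let x2 : R := a2%:~R / P%:~R in
  let x3 : R := a3%:~R / P%:~R in
  [/\ 1 < x1 + x2 + x3 < 3, -1 < x1 + x2 - x3 < 1,
      -1 < x1 - x2 + x3 < 1 & -1 < - x1 + x2 + x3 < 1] <-> balanced P a1 a2 a3.
Proof.
move=> P_gt0 x1 x2 x3.
have lt_ratio (c y : int) : ((c%:~R < y%:~R / P%:~R :> R) = (c * P < y))
                         * ((y%:~R / P%:~R < c%:~R :> R) = (y < c * P)).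
  by rewrite ltr_pdivlMr ?ltr_pdivrMr ?ltr0z // -!intrM !ltr_int.
have -> : x1 + x2 + x3 = (a1 + a2 + a3)%:~R / P%:~R by rewrite !intrD !mulrDl.
have -> : x1 + x2 - x3 = (a1 + a2 - a3)%:~R / P%:~R by rewrite !intrD intrN !mulrDl mulNr.
have -> : x1 - x2 + x3 = (a1 - a2 + a3)%:~R / P%:~R by rewrite !intrD intrN !mulrDl mulNr.
have -> : - x1 + x2 + x3 = (- a1 + a2 + a3)%:~R / P%:~R by rewrite !intrD intrN !mulrDl mulNr.
rewrite !(lt_ratio 1) !(lt_ratio 3) !(lt_ratio (-1)) /balanced !mul1r !mulN1r.
exact: rwP and4P.
Qed.

Section CoprimeModuli.

Variables p1 p2 p3 l1 l2 l3 : nat.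
Hypotheses (co12 : coprime p1 p2) (co13 : coprime p1 p3) (co23 : coprime p2 p3).
Hypotheses (l1_range : (0 < l1 < p1)%N) (l2_range : (0 < l2 < p2)%N)
  (l3_range : (0 < l3 < p3)%N).

Local Notation P := (p1 * p2 * p3)%N.
Local Notation a1 := (l1 * (P %/ p1))%N.
Local Notation a2 := (l2 * (P %/ p2))%N.
Local Notation a3 := (l3 * (P %/ p3))%N.

Lemma P_divE : [/\ P %/ p1 = p2 * p3, P %/ p2 = p1 * p3 & P %/ p3 = p1 * p2]%N.
Proof.
split; first by rewrite -mulnA mulKn //; lia.
  by rewrite [(p1 * p2)%N]mulnC -mulnA mulKn //; lia.
by rewrite mulnK //; lia.
Qed.

Lemma P_gt0 : (0 < P)%N.
Proof. by rewrite !muln_gt0; lia. Qed.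

Lemma dvdn_P : [/\ p1 %| P, p2 %| P & p3 %| P]%N.
Proof.
split; first exact/dvdn_mulr/dvdn_mulr.
  exact/dvdn_mulr/dvdn_mull.
exact/dvdn_mull.
Qed.

Lemma a_range : [/\ 0 < a1 < P, 0 < a2 < P & 0 < a3 < P]%N.
Proof.
by case: dvdn_P => *; split; apply: mul_divn_range => //; apply: P_gt0.
Qed.

Lemma a_indep (s1 s2 s3 : int) : `|s1| <= 1 -> `|s2| <= 1 -> `|s3| <= 1 ->
  (P%:Z %| s1 * a1%:Z + s2 * a2%:Z + s3 * a3%:Z)%Z -> [/\ s1 = 0, s2 = 0 & s3 = 0].
Proof.
case: P_divE => -> -> -> s1_le1 s2_le1 s3_le1.
set S := (X in (_ %| X)%Z) => P_dvd.
have dvd_S (p : nat) : (p %| P)%N -> (p%:Z %| S)%Z.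
  by move=> p_dvd; apply: dvdz_trans P_dvd; rewrite dvdzE.
split.
- apply: (@sign_coef_eq0 p1 l1 (p2 * p3) _ (s2 * (l2 * p3)%N%:Z + s3 * (l3 * p2)%N%:Z)) => //.
    by rewrite coprimeMr co12.
  rewrite (_ : _ + _ = S); first exact/dvd_S/dvdn_mulr/dvdn_mulr.
  by rewrite /S !PoszM; ring.
- apply: (@sign_coef_eq0 p2 l2 (p1 * p3) _ (s1 * (l1 * p3)%N%:Z + s3 * (l3 * p1)%N%:Z)) => //.
    by rewrite coprimeMr coprime_sym co12.
  rewrite (_ : _ + _ = S); first exact/dvd_S/dvdn_mulr/dvdn_mull.
  by rewrite /S !PoszM; ring.
- apply: (@sign_coef_eq0 p3 l3 (p1 * p2) _ (s1 * (l1 * p2)%N%:Z + s2 * (l2 * p1)%N%:Z)) => //.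
    by rewrite coprimeMr !(coprime_sym p3) co13.
  rewrite (_ : _ + _ = S); first exact/dvd_S/dvdn_mull.
  by rewrite /S !PoszM; ring.
Qed.

Lemma chi_signed_sumE (n : int) :
  chi p1 p2 p3 l1 l2 l3 n =
  \sum_e (if (n == P%:Z + signed_sum a1 a2 a3 e %[mod (2 * P)%N%:Z])%Z then - sgb3 e else 0).
Proof.
have res_def e : chi_res p1 p2 p3 l1 l2 l3 e.1.1 e.1.2 e.2 = P%:Z + signed_sum a1 a2 a3 e.
  by rewrite /chi_res /signed_sum !addrA.
rewrite /chi !exists_bool3.
rewrite (@signed_indicatorE _ _ n (fun e => chi_res p1 p2 p3 l1 l2 l3 e.1.1 e.1.2 e.2) sgb3).
- by apply: eq_bigr => e _; rewrite res_def.
- move=> e f; rewrite !res_def PoszM; apply: signed_sum_inj_mod.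
  exact: a_indep.
- by case=> -[[] []] [].
Qed.

Lemma sum_chi :
  \sum_(1 <= n < (2 * P).+1) n%:Z * chi p1 p2 p3 l1 l2 l3 n%:Z =
  if balanced P a1 a2 a3 then (4 * P)%N%:Z else 0.
Proof.
under eq_bigr do rewrite chi_signed_sumE.
case: a_range => a1_range a2_range a3_range.
by rewrite (@sum_residue_indicators P a1 a2 a3 a1_range a2_range a3_range a_indep) // PoszM.
Qed.

Lemma ratio_balancedE :
  let x1 : rat := l1%:R / p1%:R in
  let x2 : rat := l2%:R / p2%:R in
  let x3 : rat := l3%:R / p3%:R in
  [/\ 1 < x1 + x2 + x3 < 3, -1 < x1 + x2 - x3 < 1,
      -1 < x1 - x2 + x3 < 1 & -1 < - x1 + x2 + x3 < 1] <-> balanced P a1 a2 a3.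
Proof.
case: dvdn_P => dvd1 dvd2 dvd3.
rewrite /= (ratio_divn _ l1 _ _ P_gt0 dvd1) (ratio_divn _ l2 _ _ P_gt0 dvd2).
rewrite (ratio_divn _ l3 _ _ P_gt0 dvd3) (pmulrn 1 a1) (pmulrn 1 a2) (pmulrn 1 a3) (pmulrn 1 P).
exact: (@balanced_ratioE rat P _ _ _ P_gt0).
Qed.

End CoprimeModuli.

Theorem mainTheorem3 (p1 p2 p3 l1 l2 l3 : nat) :
  (0 < p1)%N -> (0 < p2)%N -> (0 < p3)%N ->
  coprime p1 p2 -> coprime p1 p3 -> coprime p2 p3 ->
  (0 < l1 < p1)%N -> (0 < l2 < p2)%N -> (0 < l3 < p3)%N ->
  let P := (p1 * p2 * p3)%N in
  let x1 : rat := l1%:R / p1%:R in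
  let x2 : rat := l2%:R / p2%:R in
  let x3 : rat := l3%:R / p3%:R in
  let S : int := \sum_(1 <= n < (2 * P).+1) (n%:Z * chi p1 p2 p3 l1 l2 l3 n%:Z) in
  let cond := [/\ 1 < x1 + x2 + x3 < 3, -1 < x1 + x2 - x3 < 1,
                  -1 < x1 - x2 + x3 < 1 & -1 < - x1 + x2 + x3 < 1] in
  (S != 0 <-> cond) /\ (cond -> S = (4 * P)%N%:Z).
Proof.
move=> _ _ _ co12 co13 co23 l1_range l2_range l3_range P x1 x2 x3 S cond.
have S_def : S = if balanced P (l1 * (P %/ p1))%N (l2 * (P %/ p2))%N (l3 * (P %/ p3))%N
                 then (4 * P)%N%:Z else 0 by apply: sum_chi.
have cond_balanced :
    cond <-> balanced P (l1 * (P %/ p1))%N (l2 * (P %/ p2))%N (l3 * (P %/ p3))%N.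
  exact: ratio_balancedE.
have P_gt0 : (0 < P)%N by rewrite /P !muln_gt0; lia.
by rewrite S_def cond_balanced; case: ifP => // _; split=> //; split=> // _; lia.
Qed.
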